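(* Let $d,N,p\in\mathbb{N}$ and let $X_1,\ldots,X_N$ be independent, uniformly distributed random points in $[0,1)^d$, with $X_j=(X_{j,1},\ldots,X_{j,d})$. For $i\in\{1,\ldots,d\}$ and $j\in\{1,\ldots,N\}$ let $X_{j,i}^{(p)}=\lfloor 2^pX_{j,i}\rfloor/2^p\in\{0,1/2^p,\ldots,(2^p-1)/2^p\}$ and $X_j^{(p)}=(X_{j,1}^{(p)},\ldots,X_{j,d}^{(p)})$. Write each $X_{j,i}^{(p)}$ in binary with $p$ digits and concatenate the corresponding $dN$ binary words (in the order $X_{1,1}^{(p)},\ldots,X_{1,d}^{(p)},X_{2,1}^{(p)},\ldots,X_{N,d}^{(p)}$) to obtain a binary word $U_m$ of length $m=pdN$. Let $\mathcal{P}=\{X_1,\ldots,X_N\}$. Then: 1. $\mathcal{P}(U_m)=\{X_1^{(p)},\ldots,X_N^{(p)}\}$; 2. $U_m$ is uniformly distributed in $\{0,1\}^m$; 3. $|D_N^{\ast}(\mathcal{P})-D_N^{\ast}(\mathcal{P}(U_m))|\le d/2^p$; 4. for every $C>0$, $$\mathbb{P}\left[D_N^{\ast}(\mathcal{P}(U_m))\ge C\sqrt{\frac{d}{N}}\right]\le\mathbb{P}\left[D_N^{\ast}(\mathcal{P})\ge C\sqrt{\frac{d}{N}}-\frac{d}{2^p}\right].$$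
   Context: For an $N$-element point set $\mathcal{Q}=\{\boldsymbol{x}_1,\ldots,\boldsymbol{x}_N\}\subset[0,1)^d$, the star-discrepancy is $D_N^{\ast}(\mathcal{Q})=\sup_{\boldsymbol{t}\in[0,1]^d}\left|\frac{\#\{k:\boldsymbol{x}_k\in[\boldsymbol{0},\boldsymbol{t})\}}{N}-\mathrm{volume}([\boldsymbol{0},\boldsymbol{t}))\right|$, where $[\boldsymbol{0},\boldsymbol{t})=[0,t_1)\times\cdots\times[0,t_d)$. Conversion of a binary word of length $m=pdN$ to a point set $\mathcal{P}(\cdot)$: split the word into $dN$ consecutive blocks of $p$ bits; a block $d_1d_2\ldots d_p$ yields the coordinate $\sum_{i=1}^p d_i2^{-i}$; consecutive groups of $d$ such coordinates form the $N$ points of $[0,1)^d$. *)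

From HB Require Import structures.
From mathcomp Require Import all_boot all_order all_algebra.
From mathcomp Require Import all_classical all_reals all_analysis.
Set Implicit Arguments. Unset Strict Implicit. Unset Printing Implicit Defensive.
Import Order.TTheory GRing.Theory Num.Theory.
Import numFieldNormedType.Exports.
Local Open Scope classical_set_scope.
Local Open Scope ring_scope.

Definition count_box (R : realType) (d N : nat) (x : 'I_N -> 'I_d -> R)
  (t : 'I_d -> R) : nat :=
  #|[set k : 'I_N | [forall i, (0 <= x k i) && (x k i < t i)]]|.

Definition star_discrepancy (R : realType) (d N : nat)
  (x : 'I_N -> 'I_d -> R) : R :=
  sup [set r : R | exists t : 'I_d -> R, (forall i, 0 <= t i <= 1) /\
        r = `| (count_box x t)%:R / N%:R - \prod_(i < d) t i |].

Definition quantize (R : realType) (p : nat) (x : R) : R :=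
  (Num.floor (2%:R ^+ p * x))%:~R / 2%:R ^+ p.

(* the point set P(w) of a binary word w: blocks of p bits, d coordinates
   per point, point j has coordinate i given by block number d*j+i *)
Definition word_to_points (R : realType) (p d N : nat) (w : seq bool) :
  'I_N -> 'I_d -> R :=
  fun j i => \sum_(k < p) (nth false w (p * (d * j + i) + k))%:R / 2%:R ^+ k.+1.

Arguments word_to_points R p d N w _ _ : clear implicits.

(* the p-digit binary expansion of n (most significant digit first) *)
Definition bits (p n : nat) : seq bool :=
  [seq odd (n %/ 2 ^ (p - k.+1)) | k <- iota 0 p].

Definition binary_word (R : realType) (p d N : nat) (x : 'I_N -> 'I_d -> R) :
  seq bool :=
  flatten [seq flatten [seq bits p (Num.truncn (2%:R ^+ p * x j i))
                        | i <- enum 'I_d] | j <- enum 'I_N].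

(* Y = (Y_0,...,Y_{d-1}) is a random vector uniformly distributed on [0,1)^d:
   measurable coordinates, and its law is Lebesgue measure restricted to
   [0,1)^d (checked on products of Borel sets, which generate the Borel sets) *)
Definition uniform_on_unit_cube (dT : measure_display) (T : measurableType dT)
  (R : realType) (P : probability T R) (d : nat) (Y : 'I_d -> T -> R) : Prop :=
  (forall i, measurable_fun setT (Y i)) /\
  forall B : 'I_d -> set R, (forall i, measurable (B i)) ->
    P [set t | forall i, B i (Y i t)] =
    (\prod_(i < d) (@lebesgue_measure R) (B i `&` `[0%R, 1%R[))%E.

(* mutual independence of the random vectors X_0,...,X_{N-1} (each in R^d):
   product rule on the generating pi-systems of product Borel events
   (taking B j = setT gives every subfamily) *)
Definition independent_vectors (dT : measure_display) (T : measurableType dT)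
  (R : realType) (P : probability T R) (N d : nat)
  (X : 'I_N -> 'I_d -> T -> R) : Prop :=
  forall B : 'I_N -> 'I_d -> set R, (forall j i, measurable (B j i)) ->
    P [set t | forall j i, B j i (X j i t)] =
    (\prod_(j < N) P [set t | forall i, B j i (X j i t)])%E.

(* A block of p bits of U_m is the binary expansion of floor(2^p X_{j,i}), so it
   decodes to X_{j,i}^{(p)}, and prescribing U_m = w pins each X_{j,i} to one
   dyadic interval of length 2^-p; independence and uniformity then give
   P[U_m = w] = 2^-(pdN).  A quantized point lies in the box [0,t) iff the
   original point lies in [0,t+), where t+ is t rounded up to the grid of mesh
   2^-p.  Comparing [0,t) with its rounded-up and rounded-down boxes changes the
   counts monotonically and the volume by at most d 2^-p, which bounds the
   difference of the two discrepancies; part 4 is then monotonicity of P. *)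

From HB Require Import structures.
From mathcomp Require Import all_boot all_order all_algebra.
From mathcomp Require Import all_classical all_reals all_analysis.
From mathcomp Require Import zify ring lra.
Import Order.TTheory GRing.Theory Num.Theory.
Import numFieldNormedType.Exports.
Local Open Scope classical_set_scope.
Local Open Scope ring_scope.

Section BinaryDigits.
Local Open Scope nat_scope.

Lemma size_bits p n : size (bits p n) = p.
Proof. by rewrite size_map size_iota. Qed.

Lemma bitsS p n : bits p.+1 n = rcons (bits p n./2) (odd n).
Proof.
rewrite /bits -[p.+1]addn1 iotaD map_cat /= add0n addn1 subnn expn0 divn1 cats1; congr rcons.
apply/eq_in_map => k; rewrite mem_iota add0n => kp.
by rewrite subSS -[p - k]prednK ?subn_gt0 // -subnS expnS divnMA divn2.
Qed.

Definition nat_of_bits (s : seq bool) : nat := foldl (fun n (b : bool) => n.*2 + b) 0 s.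

Lemma nat_of_bits_rcons s b : nat_of_bits (rcons s b) = (nat_of_bits s).*2 + b.
Proof. exact: foldl_rcons. Qed.

Lemma nat_of_bits_lt s : nat_of_bits s < 2 ^ size s.
Proof.
elim/last_ind: s => [|s b IH] //; rewrite nat_of_bits_rcons size_rcons expnS.
by case: b; rewrite -!muln2; lia.
Qed.

Lemma bitsK p n : n < 2 ^ p -> nat_of_bits (bits p n) = n.
Proof.
elim: p n => [|p IH] n; first by rewrite expn0 ltnS leqn0 => /eqP->.
rewrite bitsS nat_of_bits_rcons => lt_n.
rewrite IH; first by rewrite addnC odd_double_half.
by rewrite ltn_half_double -mul2n -expnS.
Qed.

Lemma nat_of_bitsK s : bits (size s) (nat_of_bits s) = s.
Proof.
elim/last_ind: s => [|s b IH] //.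
by rewrite size_rcons nat_of_bits_rcons bitsS addnC half_bit_double oddD odd_double addbF oddb IH.
Qed.

End BinaryDigits.

Lemma bits_sum (R : numFieldType) p n : (n < 2 ^ p)%N ->
  \sum_(k < p) (nth false (bits p n) k)%:R / 2%:R ^+ k.+1 = n%:R / 2%:R ^+ p :> R.
Proof.
elim: p n => [|p IH] n lt_n.
  by move: lt_n; rewrite expn0 ltnS leqn0 => /eqP->; rewrite big_ord0 mul0r.
have lt_half : (n./2 < 2 ^ p)%N by rewrite ltn_half_double -mul2n -expnS.
rewrite big_ord_recr /= bitsS nth_rcons size_bits ltnn eqxx.
under eq_bigr => k _ do rewrite nth_rcons size_bits ltn_ord.
rewrite IH // -[in RHS](odd_double_half n) natrD -muln2 natrM exprS.
have two_neq0 : 2%:R != 0 :> R by rewrite pnatr_eq0.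
by field; rewrite expf_neq0.
Qed.

Section Encoding.
Local Open Scope nat_scope.

Lemma size_flatten_eqsize {T : Type} s (ss : seq (seq T)) :
  all (fun l => size l == s) ss -> size (flatten ss) = s * size ss.
Proof.
elim: ss => [|l ss IH] /=; first by rewrite muln0.
by rewrite size_cat => /andP[/eqP-> /IH->]; rewrite mulnS.
Qed.

Lemma nth_flatten_eqsize {T : Type} (x0 : T) s (ss : seq (seq T)) a b :
  all (fun l => size l == s) ss -> a < size ss -> b < s ->
  nth x0 (flatten ss) (s * a + b) = nth x0 (nth [::] ss a) b.
Proof.
elim: ss a => [|l ss IH] [|a] //= /andP[/eqP size_l all_ss] lt_a lt_b.
  by rewrite muln0 nth_cat size_l lt_b.
by rewrite nth_cat size_l mulnS -addnA ltnNge leq_addr /= addKn IH.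
Qed.

Lemma block_decomposition p d N q : q < p * d * N ->
  exists j : 'I_N, exists i : 'I_d, exists2 k, k < p & q = p * (d * j + i) + k.
Proof.
move=> lt_q; have p_gt0 : 0 < p by case: p lt_q => //; rewrite !mul0n.
have d_gt0 : 0 < d by case: d lt_q => //; rewrite muln0 mul0n.
have lt_j : q %/ p %/ d < N by rewrite !ltn_divLR //; nia.
exists (Ordinal lt_j), (Ordinal (ltn_pmod (q %/ p) d_gt0)), (q %% p); first exact: ltn_pmod.
by rewrite /= (mulnC d) -divn_eq mulnC -divn_eq.
Qed.

Definition encode p {N d} (c : 'I_N -> 'I_d -> nat) : seq bool :=
  flatten [seq flatten [seq bits p (c j i) | i <- enum 'I_d] | j <- enum 'I_N].

Definition decode p d (w : seq bool) (j i : nat) : nat :=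
  nat_of_bits (mkseq (fun k => nth false w (p * (d * j + i) + k)) p).

Section EncodeDecode.
Context (p : nat) {N d : nat}.
Implicit Type c : 'I_N -> 'I_d -> nat.

Lemma all_size_encode_rows c :
  all (fun l => size l == d * p)
    [seq flatten [seq bits p (c j i) | i <- enum 'I_d] | j <- enum 'I_N].
Proof.
apply/allP => _ /mapP[j _ ->]; rewrite (size_flatten_eqsize p).
  by rewrite size_map size_enum_ord mulnC.
by apply/allP => _ /mapP[i _ ->]; rewrite size_bits.
Qed.

Lemma size_encode c : size (encode p c) = p * d * N.
Proof.
rewrite (size_flatten_eqsize (d * p)) ?all_size_encode_rows //.
by rewrite size_map size_enum_ord (mulnC d).
Qed.

Lemma nth_encode c (j : 'I_N) (i : 'I_d) k : k < p ->
  nth false (encode p c) (p * (d * j + i) + k) = nth false (bits p (c j i)) k.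
Proof.
move=> lt_k; have -> : p * (d * j + i) + k = d * p * j + (p * i + k) by ring.
rewrite /encode nth_flatten_eqsize ?all_size_encode_rows //; first last.
- by have := ltn_ord i; nia.
- by rewrite size_map size_enum_ord.
rewrite (nth_map j) ?size_enum_ord // nth_ord_enum.
rewrite (@nth_flatten_eqsize _ _ p).
- by rewrite (nth_map i) ?size_enum_ord // nth_ord_enum.
- by apply/allP => _ /mapP[i' _ ->]; rewrite size_bits.
- by rewrite size_map size_enum_ord.
- done.
Qed.

Lemma decode_lt w (j i : nat) : decode p d w j i < 2 ^ p.
Proof.
have := nat_of_bits_lt (mkseq (fun k => nth false w (p * (d * j + i) + k)) p).
by rewrite size_mkseq.
Qed.

Lemma encodeK c : (forall j i, c j i < 2 ^ p) ->
  forall (j : 'I_N) (i : 'I_d), decode p d (encode p c) j i = c j i.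
Proof.
move=> lt_c j i; rewrite /decode -[in RHS](bitsK _ _ (lt_c j i)); congr nat_of_bits.
apply: (@eq_from_nth _ false) => [|k]; rewrite size_mkseq ?size_bits // => lt_k.
by rewrite nth_mkseq // nth_encode.
Qed.

Lemma decodeK w :
  size w = p * d * N -> encode p (fun (j : 'I_N) (i : 'I_d) => decode p d w j i) = w.
Proof.
move=> size_w; apply: (@eq_from_nth _ false); first by rewrite size_encode.
rewrite size_encode => q /block_decomposition[j [i [k lt_k ->]]].
rewrite nth_encode //.
have := nat_of_bitsK (mkseq (fun k => nth false w (p * (d * j + i) + k)) p).
by rewrite size_mkseq => ->; rewrite nth_mkseq.
Qed.

End EncodeDecode.
End Encoding.

Section DyadicCells.
Context {R : realType}.
Implicit Types (x : R) (p n : nat).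

Lemma twoX_gt0 p : 0 < 2%:R ^+ p :> R.
Proof. by rewrite exprn_gt0 ?ltr0n. Qed.

Lemma quantizeE p x : 0 <= x -> quantize p x = (Num.truncn (2%:R ^+ p * x))%:R / 2%:R ^+ p.
Proof.
move=> x_ge0; have y_ge0 : 0 <= 2%:R ^+ p * x by rewrite mulr_ge0 ?exprn_ge0 ?ler0n.
by rewrite /quantize truncn_floor y_ge0 natr_absz ger0_norm // floor_ge0.
Qed.

Lemma truncn_dyadic_lt p x : 0 <= x < 1 -> (Num.truncn (2%:R ^+ p * x) < 2 ^ p)%N.
Proof.
case/andP=> x_ge0 x_lt1; rewrite truncn_lt_nat ?mulr_ge0 ?exprn_ge0 ?ler0n // natrX.
by rewrite gtr_pMr ?twoX_gt0.
Qed.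

Lemma truncn_dyadicP p x n : 0 <= x ->
  Num.truncn (2%:R ^+ p * x) = n <-> `[n%:R / 2%:R ^+ p, n.+1%:R / 2%:R ^+ p[%classic x.
Proof.
move=> x_ge0; rewrite /= in_itv /= ler_pdivrMr ?twoX_gt0 // ltr_pdivlMr ?twoX_gt0 //.
rewrite ![x * _]mulrC -truncn_eq ?mulr_ge0 ?exprn_ge0 ?ler0n //.
by split=> [->|/eqP].
Qed.

Lemma lebesgue_measure_dyadic_cell p n : (n < 2 ^ p)%N ->
  (@lebesgue_measure R)
    (`[n%:R / 2%:R ^+ p, n.+1%:R / 2%:R ^+ p[%classic `&` `[0, 1[%classic)
  = ((2%:R ^+ p)^-1)%:E.
Proof.
move=> lt_n; rewrite setIidl; last first.
  move=> y /=; rewrite !in_itv /= => /andP[lo hi]; apply/andP; split.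
    by apply: le_trans lo; rewrite divr_ge0 ?ler0n ?exprn_ge0.
  by apply: lt_le_trans hi _; rewrite ler_pdivrMr ?twoX_gt0 // mul1r -natrX ler_nat.
rewrite lebesgue_measure_itv /= lte_fin ltr_pM2r ?invr_gt0 ?twoX_gt0 // ltr_nat ltnSn.
by rewrite -EFinD -mulrBl -natrB // subSnn mul1r.
Qed.

Lemma word_to_points_encode p d N (c : 'I_N -> 'I_d -> nat) :
  (forall j i, (c j i < 2 ^ p)%N) ->
  word_to_points R p d N (encode p c) = fun j i => (c j i)%:R / 2%:R ^+ p.
Proof.
move=> lt_c; apply/funext => j; apply/funext => i; rewrite -bits_sum //.
by apply: eq_bigr => k _; rewrite nth_encode.
Qed.

Lemma word_to_points_binary_word p d N (x : 'I_N -> 'I_d -> R) :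
  (forall j i, 0 <= x j i < 1) ->
  word_to_points R p d N (binary_word p x) = fun j i => quantize p (x j i).
Proof.
move=> x01; rewrite /binary_word -/(encode p _) word_to_points_encode => [|j i].
  by apply/funext => j; apply/funext => i; rewrite quantizeE //; case/andP: (x01 j i).
exact: truncn_dyadic_lt.
Qed.

Lemma binary_word_eq_decode p {d N} {x : 'I_N -> 'I_d -> R} {w} :
  (forall j i, 0 <= x j i < 1) -> size w = (p * d * N)%N ->
  binary_word p x = w <->
  forall (j : 'I_N) (i : 'I_d), `[(decode p d w j i)%:R / 2%:R ^+ p,
                (decode p d w j i).+1%:R / 2%:R ^+ p[%classic (x j i).
Proof.
move=> x01 size_w; have x_ge0 j i : 0 <= x j i by case/andP: (x01 j i).
rewrite /binary_word -/(encode p _); split=> [<- j i | cell].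
  by apply/truncn_dyadicP => //; rewrite encodeK // => j' i'; exact: truncn_dyadic_lt.
rewrite -(decodeK p w size_w); congr encode; apply/funext => j; apply/funext => i.
exact/truncn_dyadicP.
Qed.

End DyadicCells.

Section UniformWord.
Context {R : realType} {dT : measure_display} {T : measurableType dT}.

Lemma probability_binary_word (P : probability T R) d N p (X : 'I_N -> 'I_d -> T -> R) :
  (forall j, uniform_on_unit_cube P (X j)) -> independent_vectors P X ->
  (forall j i t, 0 <= X j i t < 1) ->
  forall w, size w = (p * d * N)%N ->
  P [set t | binary_word p (fun j i => X j i t) = w] = ((2%:R ^+ (p * d * N))^-1)%:E.
Proof.
move=> unifX indepX X01 w size_w.
pose cell (j : 'I_N) (i : 'I_d) : set R :=
  `[(decode p d w j i)%:R / 2%:R ^+ p, (decode p d w j i).+1%:R / 2%:R ^+ p[%classic.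
have -> : [set t | binary_word p (fun j i => X j i t) = w] =
          [set t | forall j i, cell j i (X j i t)].
  by apply/seteqP; split=> t /= /(binary_word_eq_decode p (fun j i => X01 j i t) size_w).
rewrite indepX; last by move=> j i; exact: measurable_itv.
under eq_bigr => j _.
  rewrite (proj2 (unifX j) (cell j)); last by move=> i; exact: measurable_itv.
  under eq_bigr => i _ do rewrite lebesgue_measure_dyadic_cell ?decode_lt //.
  over.
rewrite /= !prodEFin prodr_const card_ord prodr_const card_ord.
by rewrite -exprM exprVn -exprM mulnA.
Qed.

End UniformWord.

Lemma prod_sub_le (R : realDomainType) d (a b : 'I_d -> R) e :
  (forall i, 0 <= a i <= b i) -> (forall i, b i <= 1) -> (forall i, b i - a i <= e) ->
  \prod_(i < d) b i - \prod_(i < d) a i <= d%:R * e.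
Proof.
elim: d a b => [|d IH] a b ab b_le1 ab_e; first by rewrite !big_ord0 subrr mul0r.
rewrite !big_ord_recr /= -natr1 mulrDl mul1r.
set A := \prod_(i < d) a _; set B := \prod_(i < d) b _.
have AB_e : B - A <= d%:R * e by apply: IH => i; [exact: ab | exact: b_le1 | exact: ab_e].
have A_ge0 : 0 <= A by apply: prodr_ge0 => i _; case/andP: (ab (widen_ord (leqnSn d) i)).
have A_le_B : A <= B by apply: ler_prod => i _; exact: ab.
have B_le1 : B <= 1.
  apply: prodr_ile1 => i _; rewrite b_le1 andbT.
  by case/andP: (ab (widen_ord (leqnSn d) i)); exact: le_trans.
have /andP[an_ge0 an_le_bn] := ab ord_max; have bn_le1 := b_le1 ord_max.
have bn_an_e := ab_e ord_max.
have -> : B * b ord_max - A * a ord_max = (B - A) * b ord_max + A * (b ord_max - a ord_max).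
  by ring.
apply: lerD; first by apply: le_trans AB_e; rewrite ler_piMr ?subr_ge0.
by apply: le_trans bn_an_e; rewrite ler_piMl ?subr_ge0 //; apply: le_trans B_le1.
Qed.

Section StarDiscrepancy.
Context {R : realType}.

Definition local_discrepancy {d N} (x : 'I_N -> 'I_d -> R) (t : 'I_d -> R) : R :=
  `| (count_box x t)%:R / N%:R - \prod_(i < d) t i |.

Definition in_unit_box {d} (t : 'I_d -> R) : Prop := forall i, 0 <= t i <= 1.

Context {d N : nat}.
Implicit Types (x : 'I_N -> 'I_d -> R) (t u : 'I_d -> R).

Lemma count_box_ratio_le x t u :
  (forall i, t i <= u i) -> (count_box x t)%:R / N%:R <= (count_box x u)%:R / N%:R :> R.
Proof.
move=> le_tu; rewrite ler_wpM2r ?invr_ge0 ?ler0n // ler_nat.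
apply/subset_leq_card/fintype.subsetP => k; rewrite !inE => /forallP box_k.
apply/forallP => i; case/andP: (box_k i) => -> /= /lt_le_trans; exact.
Qed.

Lemma local_discrepancy_le1 x t : in_unit_box t -> local_discrepancy x t <= 1.
Proof.
move=> t01; have /andP[prod_ge0 prod_le1] : 0 <= \prod_(i < d) t i <= 1.
  apply/andP; split; first by apply: prodr_ge0 => i _; case/andP: (t01 i).
  exact: prodr_ile1.
have ratio_ge0 : 0 <= (count_box x t)%:R / N%:R :> R by rewrite divr_ge0.
have ratio_le1 : (count_box x t)%:R / N%:R <= 1 :> R.
  have [N0|N_gt0] := posnP N.
    have -> : N%:R = 0 :> R by rewrite N0.
    by rewrite invr0 mulr0.
  by rewrite ler_pdivrMr ?ltr0n // mul1r ler_nat -[leqRHS]card_ord max_card.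
by rewrite /local_discrepancy ler_norml; apply/andP; split; lra.
Qed.

Lemma has_sup_local_discrepancy x :
  has_sup [set r | exists t, in_unit_box t /\ r = local_discrepancy x t].
Proof.
split; first by exists (local_discrepancy x (fun=> 0)), (fun=> 0); split=> // i; rewrite lexx ler01.
by exists 1 => _ [t [t01 ->]]; exact: local_discrepancy_le1.
Qed.

Lemma local_discrepancy_le_star x t :
  in_unit_box t -> local_discrepancy x t <= star_discrepancy x.
Proof. by move=> t01; apply: (sup_upper_bound (has_sup_local_discrepancy x)); exists t. Qed.

Lemma star_discrepancy_le x M :
  (forall t, in_unit_box t -> local_discrepancy x t <= M) -> star_discrepancy x <= M.
Proof.
move=> le_M; apply: ge_sup => [|_ [t [t01 ->]]]; last exact: le_M.
by case: (has_sup_local_discrepancy x).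
Qed.

End StarDiscrepancy.

Section QuantizedDiscrepancy.
Context {R : realType} (p : nat).
Implicit Types (r s : R).

Definition dyadic_ceil r : R := (Num.ceil (2%:R ^+ p * r))%:~R / 2%:R ^+ p.

Lemma twoX_neq0 : 2%:R ^+ p != 0 :> R.
Proof. by rewrite gt_eqF ?twoX_gt0. Qed.

Lemma quantize_ge0 r : (0 <= quantize p r) = (0 <= r).
Proof. by rewrite pmulr_lge0 ?invr_gt0 ?twoX_gt0 // ler0z floor_ge0 pmulr_rge0 ?twoX_gt0. Qed.

Lemma quantize_lt r s : (quantize p r < s) = (r < dyadic_ceil s).
Proof.
rewrite ltr_pdivrMr ?twoX_gt0 // ltr_pdivlMr ?twoX_gt0 //.
by rewrite -ceil_gt_int floor_lt_int ![_ * 2%:R ^+ p]mulrC.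
Qed.

Lemma dyadic_ceil_dyadic (k : int) : dyadic_ceil (k%:~R / 2%:R ^+ p) = k%:~R / 2%:R ^+ p.
Proof. by rewrite /dyadic_ceil [2%:R ^+ p * _]mulrC divfK ?twoX_neq0 // intrKceil. Qed.

Lemma dyadic_ceil_bounds r : 0 <= r <= 1 ->
  [/\ r <= dyadic_ceil r, dyadic_ceil r <= 1 & dyadic_ceil r - r <= (2%:R ^+ p)^-1].
Proof.
case/andP=> r_ge0 r_le1; have two_gt0 : 0 < 2%:R ^+ p :> R := twoX_gt0 p.
rewrite /dyadic_ceil.
have ceil_lt := ceilB1_lt (2%:R ^+ p * r); rewrite intrB in ceil_lt.
split.
- by rewrite ler_pdivlMr // mulrC ceil_ge.
- have ceil_le : Num.ceil (2%:R ^+ p * r) <= (2 ^ p)%N.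
    by rewrite ceil_le_int -pmulrn natrX ler_piMr // ltW.
  by rewrite ler_pdivrMr // mul1r; move: ceil_le; rewrite -(ler_int R) -pmulrn natrX.
- have -> : (Num.ceil (2%:R ^+ p * r))%:~R / 2%:R ^+ p - r
            = ((Num.ceil (2%:R ^+ p * r))%:~R - r * 2%:R ^+ p) / 2%:R ^+ p.
    by rewrite mulrBl mulfK ?twoX_neq0.
  by rewrite -[leRHS]mul1r ler_pM2r ?invr_gt0 //; lra.
Qed.

Lemma quantize_bounds r : 0 <= r <= 1 ->
  [/\ 0 <= quantize p r, quantize p r <= r & r - quantize p r <= (2%:R ^+ p)^-1].
Proof.
case/andP=> r_ge0 r_le1; have two_gt0 : 0 < 2%:R ^+ p :> R := twoX_gt0 p.
rewrite quantize_ge0 r_ge0 /quantize.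
have /andP[floor_le floor_gt] := floor_itv (2%:R ^+ p * r); rewrite intrD in floor_gt.
split=> //; first by rewrite ler_pdivrMr // [r * _]mulrC.
have -> : r - (Num.floor (2%:R ^+ p * r))%:~R / 2%:R ^+ p
          = (r * 2%:R ^+ p - (Num.floor (2%:R ^+ p * r))%:~R) / 2%:R ^+ p.
  by rewrite mulrBl mulfK ?twoX_neq0.
by rewrite -[leRHS]mul1r ler_pM2r ?invr_gt0 //; lra.
Qed.

Context {d N : nat} (x : 'I_N -> 'I_d -> R).

Lemma count_box_quantize t :
  count_box (fun j i => quantize p (x j i)) t = count_box x (fun i => dyadic_ceil (t i)).
Proof.
apply: eq_card => k; rewrite /in_mem /= /in_set /= !asboolb; apply: eq_forallb => i.
by rewrite quantize_ge0 quantize_lt.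
Qed.

Lemma local_discrepancy_quantize_le t : in_unit_box t ->
  local_discrepancy (fun j i => quantize p (x j i)) t <= star_discrepancy x + d%:R / 2%:R ^+ p.
Proof.
move=> t01; pose u i := dyadic_ceil (t i); have u_bounds i := dyadic_ceil_bounds _ (t01 i).
have u01 : in_unit_box u.
  move=> i; have [t_le_u u_le1 _] := u_bounds i.
  by rewrite u_le1 andbT; case/andP: (t01 i) => /le_trans->.
rewrite /local_discrepancy count_box_quantize.
apply: le_trans (ler_distD (\prod_(i < d) u i) _ _) _; apply: lerD.
  exact: local_discrepancy_le_star.
have t_le_u i : 0 <= t i <= u i by case/andP: (t01 i) => -> _; case: (u_bounds i).
rewrite ger0_norm ?subr_ge0; last by apply: ler_prod => i _; exact: t_le_u.
by apply: prod_sub_le => // i; case: (u_bounds i).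
Qed.

Lemma local_discrepancy_le_quantize t : in_unit_box t ->
  local_discrepancy x t <= star_discrepancy (fun j i => quantize p (x j i)) + d%:R / 2%:R ^+ p.
Proof.
move=> t01; pose u i := dyadic_ceil (t i); pose v i := quantize p (t i).
have u_bounds i := dyadic_ceil_bounds _ (t01 i); have v_bounds i := quantize_bounds _ (t01 i).
have t_ge0 i : 0 <= t i by case/andP: (t01 i).
have t_le1 i : t i <= 1 by case/andP: (t01 i).
have u01 : in_unit_box u.
  by move=> i; have [t_le_u u_le1 _] := u_bounds i; rewrite u_le1 (le_trans (t_ge0 i)).
have v01 : in_unit_box v.
  by move=> i; have [v_ge0 v_le_t _] := v_bounds i; rewrite v_ge0 (le_trans v_le_t).
have count_u : count_box (fun j i => quantize p (x j i)) u = count_box x u.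
  by rewrite count_box_quantize; congr count_box; apply/funext => i; rewrite dyadic_ceil_dyadic.
have count_v : count_box (fun j i => quantize p (x j i)) v = count_box x v.
  by rewrite count_box_quantize; congr count_box; apply/funext => i; rewrite dyadic_ceil_dyadic.
have disc_u := local_discrepancy_le_star (fun j i => quantize p (x j i)) u u01.
have disc_v := local_discrepancy_le_star (fun j i => quantize p (x j i)) v v01.
rewrite /local_discrepancy count_u count_v !ler_norml in disc_u disc_v.
have count_t_u : (count_box x t)%:R / N%:R <= (count_box x u)%:R / N%:R :> R.
  by apply: count_box_ratio_le => i; case: (u_bounds i).
have count_v_t : (count_box x v)%:R / N%:R <= (count_box x t)%:R / N%:R :> R.
  by apply: count_box_ratio_le => i; case: (v_bounds i).
have prod_u_t : \prod_(i < d) u i - \prod_(i < d) t i <= d%:R / 2%:R ^+ p.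
  by apply: prod_sub_le => i; case: (u_bounds i) => // -> _ _; rewrite t_ge0.
have prod_t_v : \prod_(i < d) t i - \prod_(i < d) v i <= d%:R / 2%:R ^+ p.
  by apply: prod_sub_le => i; case: (v_bounds i) => // -> ->.
move: disc_u disc_v => /andP[? ?] /andP[? ?].
by rewrite /local_discrepancy ler_norml; apply/andP; split; lra.
Qed.

Lemma star_discrepancy_quantize :
  `| star_discrepancy x - star_discrepancy (fun j i => quantize p (x j i)) | <= d%:R / 2%:R ^+ p.
Proof.
have := star_discrepancy_le _ _ local_discrepancy_le_quantize.
have := star_discrepancy_le _ _ local_discrepancy_quantize_le.
by rewrite ler_norml => ? ?; apply/andP; split; lra.
Qed.

End QuantizedDiscrepancy.

Lemma le_add_dyadic {R : archiRealFieldType} (x y e : R) :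
  (forall k, x <= y + e / 2%:R ^+ k) -> x <= y.
Proof.
move=> le_xy; apply/ler_addgt0Pr => eps eps_gt0; pose k := Num.truncn (eps^-1 * e).
apply: le_trans (le_xy k) _; rewrite lerD2l ler_pdivrMr ?exprn_gt0 ?ltr0n //.
rewrite -ler_pdivrMl //; apply: le_trans (ltW (truncnS_gt _)) _.
by rewrite -natrX ler_nat /k ltn_expl.
Qed.

Section Measurability.
Context {R : realType} {dT : measure_display} {T : measurableType dT}.

Lemma measurable_cylinder (I : finType) (f : I -> T -> R) (B : I -> set R) :
  (forall i, measurable_fun setT (f i)) -> (forall i, measurable (B i)) ->
  measurable [set t | forall i, B i (f i t)].
Proof.
move=> mf mB; have -> : [set t | forall i, B i (f i t)] = \bigcap_(i in setT) (f i @^-1` B i).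
  by apply/seteqP; split=> [t fB i _ | t fB i]; exact: fB.
apply: fin_bigcap_measurable => [|i _]; first exact: finite_finset.
by rewrite -[X in measurable X]setTI; exact: mf.
Qed.

Context {d N : nat} {X : 'I_N -> 'I_d -> T -> R}.
Hypotheses (mX : forall j i, measurable_fun setT (X j i)) (X01 : forall j i t, 0 <= X j i t < 1).

(* the quantized points range over the finitely many grids of mesh 2^-p *)
Lemma measurable_quantized_event p (E : ('I_N -> 'I_d -> R) -> Prop) :
  measurable [set t | E (fun j i => quantize p (X j i t))].
Proof.
pose G := {ffun 'I_N * 'I_d -> 'I_(2 ^ p)}.
pose grid (g : G) j i : R := (g (j, i))%:R / 2%:R ^+ p.
pose cell (g : G) (ji : 'I_N * 'I_d) : set R :=
  `[(g ji : nat)%:R / 2%:R ^+ p, (g ji).+1%:R / 2%:R ^+ p[%classic.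
have X_ge0 j i t : 0 <= X j i t by case/andP: (X01 j i t).
have cell_grid t g : (forall ji, cell g ji (X ji.1 ji.2 t)) ->
    (fun j i => quantize p (X j i t)) = grid g.
  move=> cell_t; apply/funext => j; apply/funext => i.
  by rewrite quantizeE // /grid (proj2 (truncn_dyadicP _ _ _ (X_ge0 j i t)) (cell_t (j, i))).
have -> : [set t | E (fun j i => quantize p (X j i t))] =
    \bigcup_(g in [set g | E (grid g)]) [set t | forall ji, cell g ji (X ji.1 ji.2 t)].
  apply/seteqP; split=> t /= => [Et | [g Eg /cell_grid->//]].
  pose g : G := [ffun ji => Ordinal (truncn_dyadic_lt p _ (X01 ji.1 ji.2 t))].
  have cell_t ji : cell g ji (X ji.1 ji.2 t) by apply/truncn_dyadicP; rewrite ?ffunE.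
  by exists g; rewrite //= -(cell_grid t g cell_t).
apply: fin_bigcup_measurable => [|g _]; first exact: finite_finset.
by apply: measurable_cylinder => ji; [exact: mX | exact: measurable_itv].
Qed.

(* D_N^* is within d 2^-k of a function of the k-bit quantization, for every k *)
Lemma measurable_star_discrepancy_ge a :
  measurable [set t | a <= star_discrepancy (fun j i => X j i t)].
Proof.
have -> : [set t | a <= star_discrepancy (fun j i => X j i t)] =
    \bigcap_k [set t | a - d%:R / 2%:R ^+ k
                        <= star_discrepancy (fun j i => quantize k (X j i t))].
  apply/seteqP; split=> t /= => [a_le k _ | a_le].
    by have := star_discrepancy_quantize k (fun j i => X j i t); rewrite ler_norml /=; lra.
  apply: (le_add_dyadic _ _ (d%:R *+ 2)) => k; have /= := a_le k I.
  have := star_discrepancy_quantize k (fun j i => X j i t); rewrite ler_norml mulr2n mulrDl.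
  by lra.
apply: bigcapT_measurable => k.
exact: (measurable_quantized_event k (fun y => _ <= star_discrepancy y)).
Qed.

End Measurability.

Theorem lemma1 (R : realType) (dT : measure_display) (T : measurableType dT)
  (P : probability T R) (d N p : nat) (X : 'I_N -> 'I_d -> T -> R) :
  (forall j, uniform_on_unit_cube P (X j)) ->
  independent_vectors P X ->
  (forall j i t, 0 <= X j i t < 1) ->
  let U := fun t => binary_word p (fun j i => X j i t) in
  let m := (p * d * N)%N in
  [/\ (* 1. P(U_m) = {X_1^(p), ..., X_N^(p)} *)
      forall t, word_to_points R p d N (U t) = (fun j i => quantize p (X j i t)),
      (* 2. U_m is uniformly distributed in {0,1}^m *)
      (forall t, size (U t) = m) /\
        (forall w : seq bool, size w = m ->
           P [set t | U t = w] = ((2%:R ^+ m)^-1)%:E),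
      (* 3. *)
      forall t, `| star_discrepancy (fun j i => X j i t)
                   - star_discrepancy (word_to_points R p d N (U t)) |
                <= d%:R / 2%:R ^+ p
    & (* 4. *)
      forall C : R, 0 < C ->
        (P [set t | (C * Num.sqrt (d%:R / N%:R)
                      <= star_discrepancy (word_to_points R p d N (U t)))%R]
         <= P [set t | (C * Num.sqrt (d%:R / N%:R) - d%:R / 2%:R ^+ p
                      <= star_discrepancy (fun j i => X j i t))%R])%E ].
Proof.
move=> unifX indepX X01 U m.
have mX j i : measurable_fun setT (X j i) := (unifX j).1 i.
have points_U t : word_to_points R p d N (U t) = fun j i => quantize p (X j i t).
  exact: word_to_points_binary_word.
split=> [t | | t | c _].
- exact: points_U.
- by split=> [t|]; [exact: size_encode | exact: probability_binary_word].
- by rewrite points_U; exact: star_discrepancy_quantize.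
- under eq_set => t do rewrite points_U.
  apply: le_measure; rewrite ?inE.
  + exact: (measurable_quantized_event mX X01 p (fun y => _ <= star_discrepancy y)).
  + exact: measurable_star_discrepancy_ge.
  + move=> t /= le_c; have := star_discrepancy_quantize p (fun j i => X j i t).
    by rewrite ler_norml => /andP[? ?]; lra.
Qed.
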